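(* Let $f:[\frac13,2]\to[\frac13,2]$ be defined by $f(x)=2x$ if $x\in[\frac13,1)$ and $f(x)=\frac{x}{3}$ if $x\in[1,2]$. Then for every $x\in[\frac13,2]$ the orbit $\{f^n(x): n\ge 0\}$ is dense in $[\frac13,2]$. *)

From Stdlib Require Import Reals.
Open Scope R_scope.

(* The map f on [1/3,2]: f x = 2x on [1/3,1), f x = x/3 on [1,2].
   It is defined on all of R as a total function; only its values on
   [1/3,2] matter (it maps [1/3,2] into itself). *)
Definition f (x : R) : R :=
  if Rlt_dec x 1 then 2 * x else x / 3.

Fixpoint f_iter (n : nat) (x : R) : R :=
  match n with
  | O => x
  | S m => f (f_iter m x)
  end.

(* In logarithmic coordinates the map is the rotation by [ln 2] of the circle
   [[-ln 3, ln 2]] of length [ln 6] (doubling adds [ln 2]; dividing by 3 adds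
   [ln 2 - ln 6]).  Since [2^p <> 6^q], the group generated by [ln 2] and
   [ln 6] is not cyclic, hence has arbitrarily small positive elements, and
   natural multiples of such an element come within its size of every point
   of the circle.  Targets kept at distance [d] from the ends of the window are
   then reached without wrap-around, and [exp] is 2-Lipschitz on the window. *)

From Pilot Require Import Defs.
From Stdlib Require Import Reals Lra Lia Classical.
Open Scope R_scope.

Lemma ln_le_ln (x y : R) : 0 < x -> x <= y -> ln x <= ln y.
Proof.
  intros Hx [Hxy | ->]; [left; exact (ln_increasing x y Hx Hxy) | lra].
Qed.

Lemma exp_lipschitz (c t s : R) :
  t <= c -> s <= c -> Rabs (exp t - exp s) <= exp c * Rabs (t - s).
Proof.
  assert (ordered : forall t s, s <= t -> t <= c -> exp t - exp s <= exp c * (t - s)).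
  { intros t' s' Hst Htc.
    assert (exp s' = exp t' * exp (- (t' - s')))
      by (rewrite <- exp_plus; f_equal; ring).
    pose proof (exp_ineq1_le (- (t' - s'))).
    assert (exp t' <= exp c)
      by (destruct Htc as [Htc | ->]; [left; apply exp_increasing |]; lra).
    pose proof (exp_pos t'). nra. }
  intros Htc Hsc; destruct (Rle_dec s t) as [Hst | Hts].
  - pose proof (ordered t s Hst Htc).
    assert (exp s <= exp t)
      by (destruct Hst as [Hst | ->]; [left; apply exp_increasing |]; lra).
    rewrite !Rabs_pos_eq by lra; lra.
  - pose proof (ordered s t ltac:(lra) Hsc).
    pose proof (exp_increasing t s ltac:(lra)).
    rewrite !Rabs_left by lra; lra.
Qed.

Lemma approx_by_nat_multiples_pos (b beta u : R) :
  0 < b -> 0 < beta ->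
  exists (j : nat) (m : Z), Rabs (INR j * beta + IZR m * b - u) < beta.
Proof.
  intros Hb Hbeta.
  set (m := (- up (- u / b))%Z).
  assert (Hm : IZR m * b <= u).
  { destruct (archimed (- u / b)) as [Hup _].
    assert (- u = (- u / b) * b) by (field; lra).
    unfold m; rewrite opp_IZR; nra. }
  set (q := (u - IZR m * b) / beta).
  assert (Hq : 0 <= q) by (apply Rmult_le_pos; [lra | left; apply Rinv_0_lt_compat; lra]).
  destruct (archimed q) as [Hup1 Hup2].
  assert (Hpos : (0 < up q)%Z) by (apply lt_IZR; lra).
  exists (Z.to_nat (up q - 1)), m.
  rewrite INR_IZR_INZ, Znat.Z2Nat.id, minus_IZR by lia.
  assert (u - IZR m * b = q * beta) by (unfold q; field; lra).
  apply Rabs_def1; nra.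
Qed.

Lemma approx_by_nat_multiples (b beta u : R) :
  0 < b -> beta <> 0 ->
  exists (j : nat) (m : Z), Rabs (INR j * beta + IZR m * b - u) < Rabs beta.
Proof.
  intros Hb Hbeta; destruct (Rle_lt_dec 0 beta) as [Hpos | Hneg].
  - rewrite Rabs_pos_eq by lra.
    apply approx_by_nat_multiples_pos; lra.
  - destruct (approx_by_nat_multiples_pos b (- beta) (- u) Hb ltac:(lra))
      as [j [m Hjm]].
    exists j, (- m)%Z.
    rewrite (Rabs_left beta), opp_IZR by lra.
    rewrite <- Rabs_Ropp; replace (- _) with (INR j * - beta + IZR m * b - - u)
      by ring; exact Hjm.
Qed.

Section IrrationalRotation.

Variables a b : R.
Hypothesis a_pos : 0 < a.
Hypothesis b_pos : 0 < b.
Hypothesis incommensurable :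
  forall p q : Z, (0 < p)%Z -> (0 < q)%Z -> IZR p * a <> IZR q * b.

Definition in_Zspan (h : R) : Prop := exists p q : Z, h = IZR p * a - IZR q * b.

Lemma in_Zspan_a : in_Zspan a.
Proof. exists 1%Z, 0%Z; ring. Qed.

Lemma in_Zspan_b : in_Zspan b.
Proof. exists 0%Z, (-1)%Z; ring. Qed.

Lemma in_Zspan_sub (h h' : R) : in_Zspan h -> in_Zspan h' -> in_Zspan (h - h').
Proof.
  intros [p [q ->]] [p' [q' ->]]; exists (p - p')%Z, (q - q')%Z.
  rewrite !minus_IZR; ring.
Qed.

Lemma in_Zspan_Zmul (z : Z) (h : R) : in_Zspan h -> in_Zspan (IZR z * h).
Proof.
  intros [p [q ->]]; exists (z * p)%Z, (z * q)%Z.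
  rewrite !mult_IZR; ring.
Qed.

Section PositiveInfimum.

Variable g : R.
Hypothesis g_pos : 0 < g.
Hypothesis g_lower : forall h, in_Zspan h -> 0 < h -> g <= h.
Hypothesis g_approx : forall c, g < c -> exists h, in_Zspan h /\ 0 < h < c.

Lemma in_Zspan_inf : in_Zspan g.
Proof.
  destruct (g_approx (2 * g) ltac:(lra)) as [h1 [H1 [P1 L1]]].
  destruct (Req_dec h1 g) as [<- | Hne]; [exact H1 |].
  pose proof (g_lower h1 H1 P1).
  destruct (g_approx h1 ltac:(lra)) as [h2 [H2 [P2 L2]]].
  pose proof (g_lower h2 H2 P2).
  pose proof (g_lower (h1 - h2) (in_Zspan_sub _ _ H1 H2) ltac:(lra)).
  lra.
Qed.

Lemma in_Zspan_Zmultiple (h : R) : in_Zspan h -> exists z : Z, h = IZR z * g.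
Proof.
  intros Hh.
  set (q := h / g); destruct (archimed q) as [Hup1 Hup2].
  exists (up q - 1)%Z.
  assert (Hrem : in_Zspan (h - IZR (up q - 1) * g))
    by (apply in_Zspan_sub, in_Zspan_Zmul, in_Zspan_inf; exact Hh).
  rewrite minus_IZR in *.
  assert (h = q * g) by (unfold q; field; lra).
  destruct (Rle_lt_dec (h - (IZR (up q) - 1) * g) 0) as [Hle | Hlt].
  - nra.
  - pose proof (g_lower _ Hrem Hlt); nra.
Qed.

Lemma Zspan_no_positive_infimum : False.
Proof.
  destruct (in_Zspan_Zmultiple a in_Zspan_a) as [p Hp].
  destruct (in_Zspan_Zmultiple b in_Zspan_b) as [q Hq].
  assert (0 < IZR p) by nra.
  assert (0 < IZR q) by nra.
  apply (incommensurable q p); try (apply lt_IZR; lra).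
  rewrite Hp, Hq; ring.
Qed.

End PositiveInfimum.

Lemma Zspan_small_pos (d : R) : 0 < d -> exists h, in_Zspan h /\ 0 < h < d.
Proof.
  set (E := fun l => forall h, in_Zspan h -> 0 < h -> l <= h).
  assert (E_bound : bound E) by (exists a; intros l Hl; exact (Hl a in_Zspan_a a_pos)).
  assert (E0 : E 0) by (intros h _ Hh; lra).
  destruct (completeness E E_bound (ex_intro _ 0 E0)) as [g [g_ub g_lub]].
  assert (g_lower : forall h, in_Zspan h -> 0 < h -> g <= h)
    by (intros h Hh Hpos; apply g_lub; intros l Hl; exact (Hl h Hh Hpos)).
  assert (g_approx : forall c, g < c -> exists h, in_Zspan h /\ 0 < h < c).
  { intros c Hc; apply NNPP; intros Hnone.
    assert (Ec : E c).
    { intros h Hh Hpos; apply Rnot_lt_le; intros Hhc.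
      apply Hnone; exists h; split; [exact Hh | lra]. }
    pose proof (g_ub c Ec); lra. }
  pose proof (g_ub 0 E0).
  intros Hd; destruct (Req_dec g 0) as [-> | Hg].
  - exact (g_approx d Hd).
  - destruct (Zspan_no_positive_infimum g ltac:(lra) g_lower g_approx).
Qed.

Lemma Zspan_small_nat (d : R) :
  0 < d -> exists (n : nat) (k : Z), 0 < Rabs (INR n * a - IZR k * b) < d.
Proof.
  intros Hd.
  destruct (Zspan_small_pos (Rmin d b)) as [h [[p [q Eh]] [Hpos Hlt]]].
  { apply Rmin_glb_lt; lra. }
  assert (Hhd : h < d) by (pose proof (Rmin_l d b); lra).
  assert (Hp0 : p <> 0%Z).
  { intros ->; pose proof (Rmin_r d b).
    assert (Hq0 : 0 < IZR (- q)) by (rewrite opp_IZR; nra).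
    assert (Hq1 : IZR (- q) < 1) by (rewrite opp_IZR; nra).
    apply lt_IZR in Hq0; apply lt_IZR in Hq1; lia. }
  destruct (Z.lt_trichotomy p 0) as [Hp | [Hp | Hp]]; [| lia |].
  - exists (Z.to_nat (- p)), (- q)%Z.
    rewrite INR_IZR_INZ, Znat.Z2Nat.id, !opp_IZR by lia.
    replace (_ - _) with (- h) by (rewrite Eh; ring).
    rewrite Rabs_Ropp, Rabs_pos_eq; lra.
  - exists (Z.to_nat p), q.
    rewrite INR_IZR_INZ, Znat.Z2Nat.id, <- Eh by lia.
    rewrite Rabs_pos_eq; lra.
Qed.

Lemma rotation_dense (t d : R) :
  0 < d -> exists (n : nat) (k : Z), Rabs (INR n * a - IZR k * b - t) < d.
Proof.
  intros Hd.
  destruct (Zspan_small_nat d Hd) as [n [k [Hbeta_pos Hbeta_lt]]].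
  set (beta := INR n * a - IZR k * b) in *.
  destruct (approx_by_nat_multiples b beta t b_pos) as [j [m Hjm]].
  { intros Hz; rewrite Hz, Rabs_R0 in Hbeta_pos; lra. }
  exists (j * n)%nat, (Z.of_nat j * k - m)%Z.
  rewrite mult_INR, minus_IZR, mult_IZR, <- INR_IZR_INZ.
  replace (_ - t) with (INR j * beta + IZR m * b - t) by (unfold beta; ring).
  lra.
Qed.

End IrrationalRotation.

Lemma window_wrap_free (lo b T s d : R) (c : Z) :
  lo <= T <= lo + b -> lo + d <= s <= lo + b - d ->
  Rabs (T - s - IZR c * b) < d -> Rabs (T - s) < d.
Proof.
  intros HT Hs Herr; apply Rabs_def2 in Herr.
  destruct (Z.lt_trichotomy c 0) as [Hc | [-> | Hc]].
  - assert (IZR c <= -1) by (apply IZR_le; lia); nra.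
  - apply Rabs_def1; lra.
  - assert (1 <= IZR c) by (apply IZR_le; lia); nra.
Qed.

Lemma clamp_into_window (lo hi t d : R) :
  lo <= t <= hi -> 0 <= d -> 2 * d <= hi - lo ->
  exists s, lo + d <= s <= hi - d /\ Rabs (t - s) <= d.
Proof.
  intros Ht Hd Hwidth.
  destruct (Rle_dec t (lo + d)); [exists (lo + d) |].
  - split; [lra | apply Rabs_le; lra].
  - destruct (Rle_dec t (hi - d)); [exists t | exists (hi - d)].
    + split; [lra |]; rewrite Rminus_diag, Rabs_R0; lra.
    + split; [lra | apply Rabs_le; lra].
Qed.

Lemma pow2_neq_pow6 (l m : nat) : (0 < m)%nat -> (2 ^ l <> 6 ^ m)%nat.
Proof.
  intros Hm.
  assert (pow2_mod3 : forall l, exists q, (2 ^ l = 3 * q + 1 \/ 2 ^ l = 3 * q + 2)%nat).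
  { intros k; induction k as [| k [q [Hq | Hq]]].
    - exists 0%nat; simpl; lia.
    - exists (2 * q)%nat; simpl; lia.
    - exists (2 * q + 1)%nat; simpl; lia. }
  destruct (pow2_mod3 l) as [q Hq]; destruct m as [| m]; [lia |].
  simpl; lia.
Qed.

Lemma ln2_ln6_incommensurable (p q : Z) :
  (0 < p)%Z -> (0 < q)%Z -> IZR p * ln 2 <> IZR q * ln 6.
Proof.
  intros Hp Hq Heq.
  rewrite <- (Znat.Z2Nat.id p), <- (Znat.Z2Nat.id q), <- !INR_IZR_INZ in Heq by lia.
  rewrite <- !ln_pow in Heq by lra.
  apply ln_inv in Heq; try (apply pow_lt; lra).
  apply (pow2_neq_pow6 (Z.to_nat p) (Z.to_nat q)); [lia |].
  apply INR_eq; rewrite !pow_INR.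
  replace (INR 2) with 2 by (simpl; lra); replace (INR 6) with 6 by (simpl; lra).
  exact Heq.
Qed.

(* Plain [f] would be captured by the projection of Stdlib's [family] record. *)
Lemma f_window (z : R) : 1/3 <= z <= 2 -> 1/3 <= Defs.f z <= 2.
Proof. unfold Defs.f; destruct (Rlt_dec z 1); lra. Qed.

Lemma f_iter_window (x : R) (n : nat) : 1/3 <= x <= 2 -> 1/3 <= f_iter n x <= 2.
Proof. intros Hx; induction n as [| n IH]; [exact Hx | exact (f_window _ IH)]. Qed.

Lemma ln_window (z : R) : 1/3 <= z <= 2 -> - ln 3 <= ln z <= ln 2.
Proof.
  intros Hz; replace (- ln 3) with (ln (1/3))
    by (unfold Rdiv; rewrite Rmult_1_l, ln_Rinv; lra).
  split; apply ln_le_ln; lra.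
Qed.

Lemma ln2_pos : 0 < ln 2.
Proof. pose proof ln_lt_2; lra. Qed.

Lemma ln3_pos : 0 < ln 3.
Proof. rewrite <- ln_1; apply ln_increasing; lra. Qed.

Lemma ln6_eq : ln 6 = ln 2 + ln 3.
Proof. rewrite <- ln_mult by lra; f_equal; lra. Qed.

Lemma ln_f (z : R) : 0 < z -> exists k : Z, ln (Defs.f z) = ln z + ln 2 - IZR k * ln 6.
Proof.
  intros Hz; unfold Defs.f; destruct (Rlt_dec z 1).
  - exists 0%Z; rewrite ln_mult by lra; ring.
  - exists 1%Z; unfold Rdiv; rewrite ln_mult, ln_Rinv, ln6_eq by lra; ring.
Qed.

Lemma ln_f_iter (x : R) (n : nat) : 1/3 <= x <= 2 ->
  exists k : Z, ln (f_iter n x) = ln x + INR n * ln 2 - IZR k * ln 6.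
Proof.
  intros Hx; induction n as [| n [k Hk]].
  - exists 0%Z; simpl; ring.
  - pose proof (f_iter_window x n Hx).
    destruct (ln_f (f_iter n x) ltac:(lra)) as [k' Hk'].
    exists (k + k')%Z; simpl f_iter.
    rewrite Hk', Hk, S_INR, plus_IZR; ring.
Qed.

Lemma orbit_log_approx (x s d : R) :
  1/3 <= x <= 2 -> 0 < d -> - ln 3 + d <= s <= ln 2 - d ->
  exists n : nat, Rabs (ln (f_iter n x) - s) < d.
Proof.
  intros Hx Hd Hs.
  pose proof ln2_pos; pose proof ln3_pos.
  destruct (rotation_dense (ln 2) (ln 6) ln2_pos ltac:(rewrite ln6_eq; lra)
              ln2_ln6_incommensurable (s - ln x) d Hd) as [n [k Hnk]].
  destruct (ln_f_iter x n Hx) as [kn Hkn].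
  exists n; apply (window_wrap_free (- ln 3) (ln 6) _ _ _ (k - kn)).
  - pose proof (ln_window _ (f_iter_window x n Hx)); rewrite ln6_eq; lra.
  - rewrite ln6_eq; lra.
  - replace (_ - _ - _) with (INR n * ln 2 - IZR k * ln 6 - (s - ln x))
      by (rewrite Hkn, minus_IZR; ring); exact Hnk.
Qed.

Theorem mainTheorem2 :
  forall x : R, 1/3 <= x <= 2 ->
  forall y : R, 1/3 <= y <= 2 ->
  forall eps : R, 0 < eps ->
  exists n : nat, Rabs (f_iter n x - y) < eps.
Proof.
  intros x Hx y Hy eps Heps.
  pose proof ln2_pos; pose proof ln3_pos.
  set (d := Rmin (eps / 4) (ln 2 / 2)).
  assert (d_pos : 0 < d) by (apply Rmin_glb_lt; lra).
  assert (d_le : d <= eps / 4 /\ d <= ln 2 / 2) by (split; [apply Rmin_l | apply Rmin_r]).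
  destruct (clamp_into_window (- ln 3) (ln 2) (ln y) d (ln_window y Hy))
    as [s [Hs Hys]]; [lra | lra |].
  destruct (orbit_log_approx x s d Hx d_pos Hs) as [n Hclose].
  exists n.
  pose proof (f_iter_window x n Hx) as Hwin.
  assert (Hlog_close : Rabs (ln (f_iter n x) - ln y) < 2 * d).
  { replace (_ - ln y) with ((ln (f_iter n x) - s) + (s - ln y)) by ring.
    rewrite Rabs_minus_sym in Hys.
    pose proof (Rabs_triang (ln (f_iter n x) - s) (s - ln y)); lra. }
  rewrite <- (exp_ln (f_iter n x)), <- (exp_ln y) by lra.
  pose proof (exp_lipschitz (ln 2) _ _ (proj2 (ln_window _ Hwin)) (proj2 (ln_window _ Hy)))
    as Hlip.
  rewrite (exp_ln 2) in Hlip by lra; lra.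
Qed.
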